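(* Let $n\ge 2$ and let $\rho\colon F_n\rtimes B_n\to\mathbf{C}^*$ be a one-dimensional representation, extended linearly to a ring homomorphism $\mathbf{Z}[F_n\rtimes B_n]\to\mathbf{C}$. Let $\rho^+\colon B_n\to\mathrm{GL}(n,\mathbf{C})$ be defined by applying $\rho$ to each entry of the matrix $\phi(\beta)$. Then there exist $s,t\in\mathbf{C}^*$ with $\rho(\sigma_i)=s$ for all $i$ and $\rho(g_j)=t$ for all $j$, and for $i=1,\dots,n-1$ $$\rho^+(\sigma_i)=s\begin{bmatrix} I_{i-1}&&\\ &\begin{matrix}0&t\\1&1-t\end{matrix}&\\ &&I_{n-i-1}\end{bmatrix}.$$ That is, $\rho^+$ is the unreduced Burau representation specialized at $t$ and rescaled by the factor $s$.
   Context: The braid group $B_n$ has generators $\sigma_1,\dots,\sigma_{n-1}$ with relations $\sigma_i\sigma_j=\sigma_j\sigma_i$ for $|i-j|>1$ and $\sigma_i\sigma_j\sigma_i=\sigma_j\sigma_i\sigma_j$ for $|i-j|=1$. Let $F_n$ be the free group on $g_1,\dots,g_n$. The semidirect product $F_n\rtimes B_n$ is the group generated by $F_n$ and $B_n$ subject to the additional relations $g_{i+1}\sigma_i=\sigma_i g_i$, $g_i\sigma_i=\sigma_i g_i g_{i+1}g_i^{-1}$, and $g_j\sigma_i=\sigma_i g_j$ for $j\notin\{i,i+1\}$. Let $\mathbf{Z}[F_n\rtimes B_n]$ be its (noncommutative) group ring. For $i=1,\dots,n-1$ let $R_i=\begin{bmatrix}0&g_i\\1&1-g_i\end{bmatrix}$.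 Let $\phi$ be the homomorphism from $B_n$ to the group of invertible $n\times n$ matrices over $\mathbf{Z}[F_n\rtimes B_n]$ (usual matrix multiplication) given by $\phi(\sigma_i)=\sigma_i\cdot\mathrm{diag}(I_{i-1},R_i,I_{n-i-1})$, where the scalar $\sigma_i$ multiplies every entry on the left. *)

From HB Require Import structures.
From mathcomp Require Import all_boot all_order all_algebra.
From mathcomp Require Import complex.
From mathcomp Require Import Rstruct.
Set Implicit Arguments. Unset Strict Implicit. Unset Printing Implicit Defensive.
Import Order.TTheory GRing.Theory Num.Theory.
Local Open Scope ring_scope.

Definition C : Type := (Rdefinitions.R)[i].

(** Generators of F_n ⋊ B_n (1-based indices as in the paper):
    [Sg i] is sigma_i (1 <= i <= n-1), [Gg j] is g_j (1 <= j <= n). *)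
Inductive gen := Sg of nat | Gg of nat.

Definition valid_gen (n : nat) (x : gen) : bool :=
  match x with
  | Sg i => (1 <= i <= n.-1)%N
  | Gg j => (1 <= j <= n)%N
  end.

(** Words in the generators and their inverses ([true] = inverse letter). *)
Definition word := seq (gen * bool).
Definition L (x : gen) : gen * bool := (x, false).
Definition Linv (x : gen) : gen * bool := (x, true).

(** The defining relations of F_n ⋊ B_n (F_n is free, so it contributes no
    relations), as pairs of words u = v. *)
Inductive is_rel (n : nat) : word -> word -> Prop :=
  | rel_far i j : (1 <= i <= n.-1)%N -> (1 <= j <= n.-1)%N ->
      (1 < `|(i%:Z - j%:Z)%R|)%N ->
      is_rel n [:: L (Sg i); L (Sg j)] [:: L (Sg j); L (Sg i)]
  | rel_near i j : (1 <= i <= n.-1)%N -> (1 <= j <= n.-1)%N ->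
      `|(i%:Z - j%:Z)%R|%N = 1%N ->
      is_rel n [:: L (Sg i); L (Sg j); L (Sg i)] [:: L (Sg j); L (Sg i); L (Sg j)]
  | rel_act1 i : (1 <= i <= n.-1)%N ->
      is_rel n [:: L (Gg i.+1); L (Sg i)] [:: L (Sg i); L (Gg i)]
  | rel_act2 i : (1 <= i <= n.-1)%N ->
      is_rel n [:: L (Gg i); L (Sg i)]
               [:: L (Sg i); L (Gg i); L (Gg i.+1); Linv (Gg i)]
  | rel_act3 i j : (1 <= i <= n.-1)%N -> (1 <= j <= n)%N ->
      j != i -> j != i.+1 ->
      is_rel n [:: L (Gg j); L (Sg i)] [:: L (Sg i); L (Gg j)].

Definition eval_word (f : gen -> C) (w : word) : C :=
  \prod_(l <- w) (if l.2 then (f l.1)^-1 else f l.1).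

(** A one-dimensional representation rho : F_n ⋊ B_n -> C^*, given (as for
    any homomorphism out of a group presentation) by its values on the
    generators: nonzero values satisfying all defining relations. *)
Definition onedim_rep (n : nat) (f : gen -> C) : Prop :=
  (forall x, valid_gen n x -> f x != 0) /\
  (forall u v, is_rel n u v -> eval_word f u = eval_word f v).

(** Elements of the group ring Z[F_n ⋊ B_n], written as formal finite
    Z-linear combinations of group elements (words). *)
Definition gring := seq (int * word).

Definition rho_ring (f : gen -> C) (a : gring) : C :=
  \sum_(p <- a) (p.1)%:~R * eval_word f p.2.

Definition lmul_sigma (i : nat) (a : gring) : gring :=
  [seq (p.1, L (Sg i) :: p.2) | p <- a].

Definition gr0 : gring := [::].
Definition gr1 : gring := [:: ((1 : int), [::])].
Definition gr_g (i : nat) : gring := [:: ((1 : int), [:: L (Gg i)])].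
Definition gr_1_minus_g (i : nat) : gring :=
  [:: ((1 : int), [::]); ((-1 : int), [:: L (Gg i)])].

(** diag(I_{i-1}, R_i, I_{n-i-1}) with R_i = [[0, g_i], [1, 1 - g_i]];
    rows/columns are 0-based, so R_i sits in rows/columns i-1, i. *)
Definition diagR (n i : nat) : 'M[gring]_n :=
  \matrix_(j < n, k < n)
    if (j == i.-1 :> nat) && (k == i.-1 :> nat) then gr0
    else if (j == i.-1 :> nat) && (k == i :> nat) then gr_g i
    else if (j == i :> nat) && (k == i.-1 :> nat) then gr1
    else if (j == i :> nat) && (k == i :> nat) then gr_1_minus_g i
    else if (j == k :> nat) then gr1 else gr0.

Definition phi_sigma (n i : nat) : 'M[gring]_n :=
  map_mx (lmul_sigma i) (diagR n i).

Definition rho_plus_sigma (n : nat) (f : gen -> C) (i : nat) : 'M[C]_n :=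
  map_mx (rho_ring f) (phi_sigma n i).

Definition burau_block (n i : nat) (t : C) : 'M[C]_n :=
  \matrix_(j < n, k < n)
    if (j == i.-1 :> nat) && (k == i.-1 :> nat) then 0
    else if (j == i.-1 :> nat) && (k == i :> nat) then t
    else if (j == i :> nat) && (k == i.-1 :> nat) then 1
    else if (j == i :> nat) && (k == i :> nat) then 1 - t
    else if (j == k :> nat) then 1 else 0.

From HB Require Import structures.
From mathcomp Require Import all_boot all_order all_algebra.
From mathcomp Require Import complex.
From mathcomp Require Import Rstruct.
Set Implicit Arguments. Unset Strict Implicit. Unset Printing Implicit Defensive.
Import GRing.Theory.
Local Open Scope ring_scope.

(* Since C^* is abelian, the braid relation s_i s_(i+1) s_i = s_(i+1) s_i s_(i+1)
   forces rho(s_i) = rho(s_(i+1)), and g_(i+1) s_i = s_i g_i forces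
   rho(g_(i+1)) = rho(g_i).  Hence rho is constant, say s, on the s_i and t on
   the g_j, and rho applied to phi(s_i) = s_i . diag(I, R_i, I) is s times the
   block with g_i replaced by t. *)

Lemma braid_rel_eq (R : idomainType) (a b : R) :
  a != 0 -> b != 0 -> a * (b * a) = b * (a * b) -> a = b.
Proof.
move=> a_neq0 b_neq0 /eqP.
rewrite mulrA [b * (a * b)]mulrA [b * a]mulrC -subr_eq0 -mulrBr.
by rewrite mulf_eq0 mulf_eq0 (negbTE a_neq0) (negbTE b_neq0) subr_eq0 => /eqP.
Qed.

Section OneDimRep.

Variables (n : nat) (f : gen -> C).

Lemma rho_ring_lmul_sigma i a :
  rho_ring f (lmul_sigma i a) = f (Sg i) * rho_ring f a.
Proof.
rewrite /rho_ring /lmul_sigma big_map mulr_sumr; apply: eq_bigr => p _.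
by rewrite /eval_word big_cons mulrCA.
Qed.

Lemma rho_ring_gr0 : rho_ring f gr0 = 0.
Proof. by rewrite /rho_ring big_nil. Qed.

Lemma rho_ring_gr1 : rho_ring f gr1 = 1.
Proof. by rewrite /rho_ring big_seq1 /eval_word big_nil mulr1. Qed.

Lemma rho_ring_gr_g i : rho_ring f (gr_g i) = f (Gg i).
Proof. by rewrite /rho_ring big_seq1 /eval_word big_seq1 mul1r. Qed.

Lemma rho_ring_gr_1_minus_g i : rho_ring f (gr_1_minus_g i) = 1 - f (Gg i).
Proof.
by rewrite /rho_ring big_cons big_seq1 /eval_word big_nil big_seq1 mulr1 mulN1r.
Qed.

Lemma rho_plus_sigmaE i s t : f (Sg i) = s -> f (Gg i) = t ->
  rho_plus_sigma n f i = s *: burau_block n i t.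
Proof.
move=> fs ft; apply/matrixP => j k.
rewrite !mxE rho_ring_lmul_sigma fs; congr (_ * _).
by do ![case: ifP => _];
  rewrite ?rho_ring_gr0 ?rho_ring_gr1 ?rho_ring_gr_g ?rho_ring_gr_1_minus_g ?ft.
Qed.

Hypothesis rho : onedim_rep n f.

Lemma onedim_rep_neq0 x : valid_gen n x -> f x != 0.
Proof. by case: rho => nz _; apply: nz. Qed.

Lemma onedim_rep_Sg_succ i : (1 <= i)%N -> (i.+1 <= n.-1)%N ->
  f (Sg i) = f (Sg i.+1).
Proof.
move=> i_ge1 i_lt.
have valid_i : (1 <= i <= n.-1)%N by rewrite i_ge1 ltnW.
have valid_i1 : (1 <= i.+1 <= n.-1)%N by rewrite i_lt.
have dist1 : `|(i%:Z - i.+1%:Z)%R|%N = 1%N.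
  by rewrite -addn1 PoszD opprD addrA subrr add0r.
have := rho.2 _ _ (rel_near valid_i valid_i1 dist1).
rewrite /eval_word !big_cons big_nil /= !mulr1.
by apply: braid_rel_eq; apply: onedim_rep_neq0.
Qed.

Lemma onedim_rep_Gg_succ j : (1 <= j <= n.-1)%N -> f (Gg j.+1) = f (Gg j).
Proof.
move=> hj; have := rho.2 _ _ (rel_act1 hj).
rewrite /eval_word !big_cons big_nil /= !mulr1 [f (Gg _) * _]mulrC.
exact: (mulfI (onedim_rep_neq0 (x := Sg j) hj)).
Qed.

Lemma onedim_rep_Sg_const i : (1 <= i <= n.-1)%N -> f (Sg i) = f (Sg 1).
Proof.
case/andP; elim: i => [//|[//|i] IH] _ hi.
by rewrite -onedim_rep_Sg_succ // IH // ltnW.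
Qed.

Lemma onedim_rep_Gg_const j : (1 <= j <= n)%N -> f (Gg j) = f (Gg 1).
Proof.
case/andP; elim: j => [//|[//|j] IH] _ hj.
have hj' : (j.+1 <= n.-1)%N by rewrite -ltnS prednK // (leq_trans _ hj).
by rewrite onedim_rep_Gg_succ ?IH // ltnW.
Qed.

End OneDimRep.

Theorem proposition2p1 (n : nat) (f : gen -> C) :
  (2 <= n)%N -> onedim_rep n f ->
  exists s t : C,
    [/\ s != 0, t != 0,
        (forall i, (1 <= i <= n.-1)%N -> f (Sg i) = s),
        (forall j, (1 <= j <= n)%N -> f (Gg j) = t) &
        (forall i, (1 <= i <= n.-1)%N ->
           rho_plus_sigma n f i = s *: burau_block n i t)].
Proof.
move=> n_ge2 rho.
have one_le_pred : (1 <= n.-1)%N by rewrite -ltnS prednK // ltnW.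
have one_le_n : (1 <= n)%N by apply: ltnW.
exists (f (Sg 1)), (f (Gg 1)); split.
- exact: (onedim_rep_neq0 rho (x := Sg 1) one_le_pred).
- exact: (onedim_rep_neq0 rho (x := Gg 1) one_le_n).
- exact: onedim_rep_Sg_const.
- exact: onedim_rep_Gg_const.
move=> i hi; apply: rho_plus_sigmaE.
- exact: (onedim_rep_Sg_const rho).
- apply: (onedim_rep_Gg_const rho); case/andP: hi => i_ge1 i_le.
  by rewrite i_ge1 (leq_trans i_le (leq_pred n)).
Qed.
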